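(* For all $m,n\in\mathbb{N}$ and every $\boldsymbol{\gamma}\in[0,1)^m$, $\Omega^{\boldsymbol{\gamma}}(m,n)\subset\mathbf{Sing}^{\boldsymbol{\gamma}}_{m,n}(1)$.
   Context: $[0,1)^{m\times n}$ is the set of real $m\times n$ matrices with entries in $[0,1)$. For $\boldsymbol{x}\in\mathbb{R}^n$, $\|\boldsymbol{x}\|=\max_i|x_i|$; for $\boldsymbol{y}\in\mathbb{R}^m$, $\langle\boldsymbol{y}\rangle=\min_{\boldsymbol{p}\in\mathbb{Z}^m}\|\boldsymbol{y}-\boldsymbol{p}\|$. For $\psi:\mathbb{N}\to[0,\infty)$, $W_{m,n}(\psi)$ is the set of pairs $(A,\boldsymbol{\gamma})$ such that $\langle A\boldsymbol{q}-\boldsymbol{\gamma}\rangle<\psi(\|\boldsymbol{q}\|)$ for infinitely many $\boldsymbol{q}\in\mathbb{Z}^n$. ''Decreasing'' means non-increasing. $\mathcal{D}$ is the set of decreasing $\psi:\mathbb{N}\to[0,\infty)$ with $\sum_{q\ge1}q^{n-1}\psi(q)^m=\infty$; $\Omega(m,n)=\bigcap_{\psi\in\mathcal{D}}W_{m,n}(\psi)$ and $\Omega^{\boldsymbol{\gamma}}(m,n)=\{A:(A,\boldsymbol{\gamma})\in\Omega(m,n)\}$. For a decreasing $\psi:\mathbb{N}\to[0,\infty)$, $A\in[0,1)^{m\times n}$ belongs to $D^{\boldsymbol{\gamma}}_{m,n}(\psi)$ if for all sufficiently large $T$ there exists $\boldsymbol{q}\in\mathbb{Z}^n$ with $\langle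 A\boldsymbol{q}-\boldsymbol{\gamma}\rangle^m<\psi(T)$ and $1\le\|\boldsymbol{q}\|^n\le T$. With $\psi_1(T)=T^{-1}$, $\mathbf{Sing}^{\boldsymbol{\gamma}}_{m,n}(1)=\bigcap_{\epsilon>0}D^{\boldsymbol{\gamma}}_{m,n}(\epsilon\psi_1)$. *)

From HB Require Import structures.
From mathcomp Require Import all_boot all_order all_algebra.
From mathcomp Require Import all_classical all_reals all_analysis.
Set Implicit Arguments. Unset Strict Implicit. Unset Printing Implicit Defensive.
Import Order.TTheory GRing.Theory Num.Theory.
Local Open Scope ring_scope.
Local Open Scope classical_set_scope.

Section Defs.
Variable R : realType.

Definition unit_box (m n : nat) (A : 'M[R]_(m, n)) : Prop :=
  forall i j, 0 <= A i j /\ A i j < 1.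

Definition normZ (n : nat) (q : 'cV[int]_n) : nat := \max_(i < n) `|q i ord0|%N.

Definition normR (m : nat) (y : 'cV[R]_m) : R := \big[Num.max/0]_(i < m) `|y i ord0|.

Definition distZ (m : nat) (y : 'cV[R]_m) : R :=
  inf [set normR (y - map_mx (fun z : int => z%:~R) p) | p in [set: 'cV[int]_m]].

Definition AqG (m n : nat) (A : 'M[R]_(m, n)) (q : 'cV[int]_n) (g : 'cV[R]_m)
  : 'cV[R]_m := A *m map_mx (fun z : int => z%:~R) q - g.

Definition decreasing_fn (psi : nat -> R) : Prop :=
  (forall k, 0 <= psi k) /\ (forall a b, (0 < a)%N -> (a <= b)%N -> psi b <= psi a).

Definition W (m n : nat) (psi : nat -> R) (A : 'M[R]_(m, n)) (g : 'cV[R]_m) : Prop :=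
  infinite_set [set q : 'cV[int]_n | distZ (AqG A q g) < psi (normZ q)].

Definition D_class (m n : nat) (psi : nat -> R) : Prop :=
  decreasing_fn psi /\
  (\sum_(1 <= q <oo) (((q%:R : R) ^+ (n - 1) * psi q ^+ m)%:E) = +oo)%E.

Definition Omega_g (m n : nat) (g : 'cV[R]_m) (A : 'M[R]_(m, n)) : Prop :=
  unit_box A /\ forall psi, D_class m n psi -> W psi A g.

Definition Dg (m n : nat) (g : 'cV[R]_m) (psi : nat -> R) (A : 'M[R]_(m, n)) : Prop :=
  unit_box A /\
  exists T0 : nat, forall T : nat, (T0 <= T)%N ->
    exists q : 'cV[int]_n,
      distZ (AqG A q g) ^+ m < psi T /\ (1 <= normZ q ^ n <= T)%N.

Definition psi1 (T : nat) : R := (T%:R)^-1.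

Definition Sing1 (m n : nat) (g : 'cV[R]_m) (A : 'M[R]_(m, n)) : Prop :=
  forall eps : R, 0 < eps -> Dg g (fun T => eps * psi1 T) A.

End Defs.

From HB Require Import structures.
From mathcomp Require Import all_boot all_order all_algebra.
From mathcomp Require Import all_classical all_reals all_analysis.
From mathcomp Require Import zify.
Set Implicit Arguments.
Unset Strict Implicit.
Unset Printing Implicit Defensive.

Import Order.TTheory GRing.Theory Num.Theory.
Local Open Scope ring_scope.

(* If A is not in Sing(1), some eps > 0 admits arbitrarily large scales N at
   which every q with 0 < |q| <= N satisfies <Aq - g>^m >= eps / (2N)^n.
   Along a doubling sequence N_0 < N_1 < ... of such scales, let psi be the
   decreasing step function with psi^m = eps / (2 N_k)^n on (N_(k-1), N_k].
   Since N_k^n <= 2n * sum_(N_(k-1) < j <= N_k) j^(n-1), every block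
   contributes at least eps / (2^(n+1) n) to sum_q q^(n-1) psi(q)^m, so psi is
   in the class D; yet <Aq - g> >= psi(|q|) for every q <> 0, so (A, g) is not
   in W(psi), contradicting A in Omega^g. *)

Lemma normR_ge0 (R : realType) m (y : 'cV[R]_m) : 0 <= normR y.
Proof. by rewrite /normR; elim/big_ind: _ => // x z x_ge0 _; rewrite le_max x_ge0. Qed.

Lemma distZ_ge0 (R : realType) m (y : 'cV[R]_m) : 0 <= distZ y.
Proof.
apply: lb_le_inf; first by exists (normR (y - map_mx intr 0)), 0.
by move=> _ [p _ <-]; exact: normR_ge0.
Qed.

Lemma normZ_eq0 n (q : 'cV[int]_n) : normZ q = 0%N -> q = 0.
Proof.
move=> q0; apply/matrixP => i j; rewrite !mxE (ord1 j).
have : (`|q i ord0| <= normZ q)%N by exact: (leq_bigmax i).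
by rewrite q0 leqn0 absz_eq0 => /eqP.
Qed.

Lemma expn_succ_le x n : (0 < n)%N -> (x.+1 ^ n <= x ^ n + n * x.+1 ^ n.-1)%N.
Proof.
case: n => // n _ /=; elim: n => [|n IHn]; first by rewrite !expn1 expn0; lia.
have : (x * x.+1 ^ n <= x.+1 ^ n.+1)%N by rewrite expnS leq_mul2r leqnSn orbT.
rewrite [(x.+1 ^ n.+2)%N]expnS [(x ^ n.+2)%N]expnS; nia.
Qed.

Lemma expn_le_sum a b n : (0 < n)%N -> (a <= b)%N ->
  (b ^ n <= a ^ n + n * \sum_(a.+1 <= j < b.+1) j ^ n.-1)%N.
Proof.
move=> n_gt0 /subnKC <-; elim: (b - a)%N => [|d IHd].
  by rewrite addn0 big_geq // muln0 addn0.
rewrite addnS big_nat_recr /= ?ltnS ?leq_addr //.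
have := expn_succ_le (a + d) n_gt0; rewrite mulnDr; lia.
Qed.

Lemma expn_le_sum_double a b n : (0 < n)%N -> (2 * a <= b)%N ->
  (b ^ n <= 2 * n * \sum_(a.+1 <= j < b.+1) j ^ n.-1)%N.
Proof.
move=> n_gt0 le2ab.
have := expn_le_sum n_gt0 (leq_trans (leq_pmull a (isT : 0 < 2)%N) le2ab).
have : (2 * a ^ n <= b ^ n)%N.
  have : ((2 * a) ^ n <= b ^ n)%N by rewrite leq_exp2r.
  apply: leq_trans; rewrite expnMn leq_mul2r.
  by rewrite -{1}(expn1 2) leq_pexp2l ?orbT.
nia.
Qed.

Lemma exists_trunc_root n T : (0 < n)%N -> exists N, (N ^ n <= T < N.+1 ^ n)%N.
Proof.
move=> n_gt0; elim: T => [|T [N /andP [le_NT lt_TN]]].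
  by exists 0%N; rewrite exp0n // exp1n.
have [lt_TN' | ge_TN'] := ltnP T.+1 (N.+1 ^ n).
  by exists N; rewrite lt_TN' andbT; apply: leqW.
exists N.+1; rewrite ge_TN' /=.
by apply: leq_ltn_trans lt_TN _; rewrite ltn_exp2r.
Qed.

Lemma cofinal_doubling_seq (P : nat -> Prop) :
  (forall N0, exists N, (N0 <= N)%N /\ P N) ->
  exists Ns : nat -> nat,
    [/\ (0 < Ns 0)%N, forall k, (2 * Ns k <= Ns k.+1)%N & forall k, P (Ns k)].
Proof.
move=> /choice [f f_spec].
pose Ns k := iter k (fun N => f (2 * N)%N) (f 1%N).
exists Ns; split.
- by case: (f_spec 1%N).
- by move=> k; case: (f_spec (2 * Ns k)%N).
- by case=> [|k]; [case: (f_spec 1%N) | case: (f_spec (2 * Ns k)%N)].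
Qed.

Lemma nneseries_blocks_pinfty (R : realType) (u : nat -> R) (N : nat -> nat) (c : R) i0 :
  0 < c -> (forall j, 0 <= u j) -> (i0 <= N 0)%N -> (forall k, N k <= N k.+1)%N ->
  (forall k, c <= \sum_(N k <= j < N k.+1) u j) ->
  (\sum_(i0 <= j <oo) (u j)%:E = +oo)%E.
Proof.
move=> c_gt0 u_ge0 i0_le N_incr block_ge.
have N_mono : {homo N : k l / (k <= l)%N} by apply: homo_leq => //; exact: leq_trans.
have partial_ge K : K%:R * c <= \sum_(i0 <= j < N K) u j.
  elim: K => [|K IHK]; first by rewrite mul0r sumr_ge0.
  rewrite (big_cat_nat _ (n := N K)) //=; last exact: leq_trans i0_le (N_mono _ _ _).
  by rewrite -natr1 mulrDl mul1r lerD.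
apply/eqyP => B B_gt0; set K := Num.bound (B / c).
have lt_BK : B / c < K%:R by apply: archi_boundP; rewrite divr_ge0 // ltW.
apply: le_trans (nneseries_lim_ge (N K) _); last by move=> j _ _; rewrite lee_fin.
rewrite sumEFin lee_fin (le_trans _ (partial_ge K)) // -ler_pdivrMr //; exact: ltW.
Qed.

Section StepFunction.
Variables (R : realType) (m n : nat) (eps : R) (Ns : nat -> nat).
Hypotheses (m_gt0 : (0 < m)%N) (n_gt0 : (0 < n)%N) (eps_gt0 : 0 < eps).
Hypotheses (Ns0_gt0 : (0 < Ns 0)%N) (Ns_double : forall k, (2 * Ns k <= Ns k.+1)%N).

Lemma Ns_gt0 k : (0 < Ns k)%N.
Proof. by elim: k => // k IHk; apply: leq_trans (Ns_double k); rewrite muln_gt0. Qed.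

Lemma Ns_incr k : (Ns k < Ns k.+1)%N.
Proof. by have := Ns_gt0 k; have := Ns_double k; lia. Qed.

Lemma Ns_mono : {homo Ns : k l / (k <= l)%N}.
Proof. by apply: homo_leq => // [|k]; [exact: leq_trans | exact/ltnW/Ns_incr]. Qed.

Lemma Ns_gt_index k : (k < Ns k)%N.
Proof. by elim: k => // k IHk; exact: leq_ltn_trans IHk (Ns_incr k). Qed.

Definition scale_index (j : nat) : nat :=
  ex_minn (ex_intro (fun k => j <= Ns k)%N j (ltnW (Ns_gt_index j))).

Lemma scale_indexP j : (j <= Ns (scale_index j))%N.
Proof. by rewrite /scale_index; case: ex_minnP. Qed.

Lemma scale_index_min j k : (j <= Ns k)%N -> (scale_index j <= k)%N.
Proof. by rewrite /scale_index; case: ex_minnP => i _; apply. Qed.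

Definition level (k : nat) : R := eps / ((2 * Ns k) ^ n)%:R.

Lemma level_gt0 k : 0 < level k.
Proof. by rewrite divr_gt0 // ltr0n expn_gt0 muln_gt0 Ns_gt0. Qed.

Lemma level_antimono : {homo level : k l / (k <= l)%N >-> l <= k}.
Proof.
move=> k l le_kl; rewrite ler_pM2l // lef_pV2 ?posrE ?ltr0n ?expn_gt0 ?muln_gt0 ?Ns_gt0 //.
by rewrite ler_nat leq_exp2r // leq_mul2l Ns_mono.
Qed.

Definition step_psi (j : nat) : R := level (scale_index j) `^ m%:R^-1.

Lemma step_psi_expn j : step_psi j ^+ m = level (scale_index j).
Proof.
rewrite /step_psi -powR_mulrn ?powR_ge0 // -powRrM mulVf ?powRr1 ?pnatr_eq0 -?lt0n //.
exact/ltW/level_gt0.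
Qed.

Lemma step_psi_le j x : 0 <= x -> level (scale_index j) <= x ^+ m -> step_psi j <= x.
Proof. by move=> x_ge0; rewrite -step_psi_expn ler_pXn2r // nnegrE powR_ge0. Qed.

Lemma step_psi_decreasing : decreasing_fn step_psi.
Proof.
split=> [j | a b _ le_ab]; first exact: powR_ge0.
apply: ge0_ler_powR; rewrite ?nnegrE ?invr_ge0 ?ler0n ?(ltW (level_gt0 _)) //.
by apply: level_antimono; apply: scale_index_min; exact: leq_trans le_ab (scale_indexP b).
Qed.

Lemma block_sum_ge k : eps / (2 ^ n.+1 * n)%:R <=
  \sum_((Ns k).+1 <= j < (Ns k.+1).+1) j%:R ^+ (n - 1) * step_psi j ^+ m.
Proof.
set a := Ns k; set b := Ns k.+1; set S := (\sum_(a.+1 <= j < b.+1) j ^ n.-1)%N.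
have termwise : level k.+1 * S%:R <=
    \sum_(a.+1 <= j < b.+1) j%:R ^+ (n - 1) * step_psi j ^+ m.
  rewrite natr_sum mulr_sumr; apply: ler_sum_nat => j /andP [_ le_jb].
  rewrite natrX subn1 mulrC ler_wpM2l ?exprn_ge0 // step_psi_expn.
  by apply: level_antimono; apply: scale_index_min; rewrite -ltnS.
apply: le_trans termwise; rewrite /level -mulrA ler_pM2l // mulrC ler_pdivlMr; last first.
  by rewrite ltr0n expn_gt0 muln_gt0 Ns_gt0.
rewrite mulrC ler_pdivrMr ?ltr0n ?muln_gt0 ?expn_gt0 // -natrM ler_nat.
have := expn_le_sum_double n_gt0 (Ns_double k); rewrite -/a -/b -/S expnMn expnS.
nia.
Qed.

Lemma step_psi_D_class : D_class m n step_psi.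
Proof.
split; first exact: step_psi_decreasing.
apply: (@nneseries_blocks_pinfty _ _ (fun k => (Ns k).+1) (eps / (2 ^ n.+1 * n)%:R)).
- by rewrite divr_gt0 // ltr0n muln_gt0 expn_gt0.
- by move=> j; rewrite mulr_ge0 ?exprn_ge0 ?powR_ge0.
- by [].
- by move=> k; rewrite ltnS ltnW ?Ns_incr.
- exact: block_sum_ge.
Qed.

End StepFunction.

Lemma not_W_of_le_distZ (R : realType) m n (psi : nat -> R) (A : 'M[R]_(m, n)) g :
  (forall q, q != 0 -> psi (normZ q) <= distZ (AqG A q g)) -> ~ W psi A g.
Proof.
move=> psi_le; apply; apply: (sub_finite_set _ (finite_set1 0)) => q /=.
by apply: contraPeq => /psi_le; rewrite leNgt => /negP.
Qed.

Lemma good_scales_of_not_Dg (R : realType) m n (g : 'cV[R]_m) (A : 'M[R]_(m, n)) (eps : R) :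
  (0 < n)%N -> 0 <= eps -> unit_box A -> ~ Dg g (fun T => eps * psi1 R T) A ->
  forall N0, exists N, (N0 <= N)%N /\ forall q, (0 < normZ q <= N)%N ->
    eps / ((2 * N) ^ n)%:R <= distZ (AqG A q g) ^+ m.
Proof.
move=> n_gt0 eps_ge0 boxA notD N0.
have bad_T T0 : exists T, (T0 <= T)%N /\ forall q, (1 <= normZ q ^ n <= T)%N ->
    eps * psi1 R T <= distZ (AqG A q g) ^+ m.
  apply: contrapT => noT; apply: notD; split => //; exists T0 => T le_T0T.
  apply: contrapT => noq; apply: noT; exists T; split => // q q_range.
  by rewrite leNgt; apply/negP => lt_q; apply: noq; exists q.
have [T [le_T T_bad]] := bad_T (N0.+1 ^ n)%N.
(* N is the integer n-th root of T, so T < (N+1)^n <= (2N)^n. *)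
have [N /andP [le_NT lt_TN]] := exists_trunc_root T n_gt0.
have : (N0.+1 ^ n < N.+1 ^ n)%N := leq_ltn_trans le_T lt_TN.
rewrite ltn_exp2r // ltnS => lt_N0N; exists N; split; first exact: ltnW.
move=> q /andP [q_gt0 le_qN].
apply: le_trans (T_bad q _); last by rewrite expn_gt0 q_gt0 (leq_trans _ le_NT) // leq_exp2r.
have T_gt0 : (0 < T)%N by apply: leq_trans le_T; rewrite expn_gt0.
have N_gt0 : (0 < N)%N := leq_ltn_trans (leq0n N0) lt_N0N.
rewrite /psi1 ler_wpM2l // lef_pV2 ?posrE ?ltr0n ?expn_gt0 ?muln_gt0 ?N_gt0 //.
rewrite ler_nat ltnW // (leq_trans lt_TN) // leq_exp2r //; lia.
Qed.

Theorem lemma3p1 (R : realType) (m n : nat) (hm : (0 < m)%N) (hn : (0 < n)%N)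
  (g : 'cV[R]_m) (hg : forall i, 0 <= g i ord0 /\ g i ord0 < 1)
  (A : 'M[R]_(m, n)) :
  Omega_g g A -> Sing1 g A.
Proof.
move=> [boxA W_A] eps eps_gt0; apply: contrapT => notD.
have [Ns [Ns0_gt0 Ns_double Ns_good]] :=
  cofinal_doubling_seq (good_scales_of_not_Dg hn (ltW eps_gt0) boxA notD).
apply: (not_W_of_le_distZ _ (W_A _ (step_psi_D_class hm hn eps_gt0 Ns0_gt0 Ns_double))).
move=> q q_neq0; apply: step_psi_le => //; first exact: distZ_ge0.
apply: Ns_good; rewrite scale_indexP andbT lt0n.
by apply: contra q_neq0 => /eqP/normZ_eq0 ->.
Qed.
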